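(* Let $M$ be a strongly sofic monoid and let $A$ be a finite set. Then the monoid $\mathrm{CA}(M,A)$ is directly finite; in other words, $\mathrm{CA}(M,A)$ contains no submonoid isomorphic to the bicyclic monoid $\langle p,q : pq = 1\rangle$.
   Context: A monoid $M$ is strongly sofic if for every finite subset $K \subset M$ there exists an integer $\Delta_K \geq 1$ such that for every $\varepsilon > 0$ there exist a non-empty finite set $D$ and a map $\sigma \colon M \to \operatorname{Map}(D)$ (where $\operatorname{Map}(D)$ is the monoid of all maps $D \to D$ under composition) satisfying: (1) $\sigma(1_M) = \mathrm{Id}_D$; (2) $d_D^{\mathrm{Ham}}(\sigma(k_1k_2),\sigma(k_1)\sigma(k_2)) \leq \varepsilon$ for all $k_1,k_2 \in K$; (3) $d_D^{\mathrm{Ham}}(\sigma(k_1),\sigma(k_2)) \geq 1-\varepsilon$ for all distinct $k_1,k_2 \in K$; (4) $|\sigma(k)^{-1}(v)| \leq \Delta_K$ for all $k \in K$, $v \in D$. Here $d_D^{\mathrm{Ham}}(f,g) = \frac{1}{|D|}|\{v \in D : f(v) \neq g(v)\}|$. For a finite set $A$, $A^M$ is the set of maps $M \to A$ with the prodiscrete topology and shift action $(mx)(m') = x(m'm)$. $\mathrm{CA}(M,A)$ is the monoid (under composition) of all continuous $M$-equivariant maps $\tau \colon A^M \to A^M$ (cellular automata). A monoid is directly finite if $mm' = 1$ implies $m'm = 1$. *)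

From Stdlib Require Import Reals.
From mathcomp Require Import all_boot.

Set Implicit Arguments.
Unset Strict Implicit.
Unset Printing Implicit Defensive.

Definition is_monoid (M : Type) (mul : M -> M -> M) (one : M) : Prop :=
  (forall a b c, mul a (mul b c) = mul (mul a b) c) /\
  (forall a, mul one a = a) /\ (forall a, mul a one = a).

Definition ham (D : finType) (f g : D -> D) : R :=
  Rdiv (INR #|[set v : D | f v != g v]|) (INR #|D|).

(** Strongly sofic monoids. Finite subsets K of M are given by finite lists;
    the product in Map(D) is composition. *)
Definition strongly_sofic (M : Type) (mul : M -> M -> M) (one : M) : Prop :=
  forall K : seq M, exists Delta : nat, (1 <= Delta)%N /\
    forall eps : R, Rlt 0 eps ->
      exists (D : finType) (sigma : M -> D -> D),
        (0 < #|D|)%N /\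
        (forall v, sigma one v = v) /\
        (forall k1 k2, List.In k1 K -> List.In k2 K ->
           Rle (ham (sigma (mul k1 k2)) (fun v => sigma k1 (sigma k2 v))) eps) /\
        (forall k1 k2, List.In k1 K -> List.In k2 K -> k1 <> k2 ->
           Rle (Rminus 1 eps) (ham (sigma k1) (sigma k2))) /\
        (forall k, List.In k K -> forall v : D,
           (#|[set u : D | sigma k u == v]| <= Delta)%N).

Definition shift (M A : Type) (mul : M -> M -> M) (m : M) (x : M -> A) : M -> A :=
  fun m' => x (mul m' m).

(** Continuity for the prodiscrete topology on A^M (A discrete), unfolded:
    each coordinate of tau is locally constant, i.e. for every x and m there is
    a finite set F of M (a basic cylinder neighbourhood of x) such that every y
    agreeing with x on F satisfies (tau y) m = (tau x) m. *)
Definition prodiscrete_continuous (M : Type) (A : finType)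
    (tau : (M -> A) -> (M -> A)) : Prop :=
  forall (x : M -> A) (m : M), exists F : seq M,
    forall y : M -> A, (forall f, List.In f F -> y f = x f) -> tau y m = tau x m.

Definition equivariant (M : Type) (A : finType) (mul : M -> M -> M)
    (tau : (M -> A) -> (M -> A)) : Prop :=
  forall (m : M) (x : M -> A), tau (shift mul m x) = shift mul m (tau x).

Definition is_CA (M : Type) (A : finType) (mul : M -> M -> M)
    (tau : (M -> A) -> (M -> A)) : Prop :=
  prodiscrete_continuous tau /\ equivariant mul tau.

(* Suppose tau \o sigma = id but sigma (tau x) and x differ at 1. By compactness
   of A^M, sigma and tau have finite memory sets Ss and St, and then the
   restriction of x to the finite window P = {1} \cup St Ss is a pattern that no
   configuration in the image of sigma displays. Pull sigma and tau back to a
   sofic approximation rho : M -> Map(D). Off the small set B of points where rho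
   fails to be multiplicative or injective on the relevant finite set, the
   induced maps on A^D are still left inverse to each other, so the image of the
   induced sigma has at least |A|^(|D| - |B|) elements. That image also avoids
   the pattern on |W| disjoint copies of P, chosen greedily; the bound Delta on
   preimages makes |W| proportional to |D|, giving at most
   (|A|^|P| - 1)^|W| |A|^(|D| - |P||W|) elements. As |B| is an arbitrarily small
   fraction of |W|, the two estimates contradict each other. *)

From Stdlib Require Import Reals Lra.
From Stdlib Require List.
From mathcomp Require Import all_boot zify.
From mathcomp Require Import boolp.
From mathcomp Require mathcomp_extra classical_sets cardinality topology function_spaces.

Set Implicit Arguments.
Unset Strict Implicit.
Unset Printing Implicit Defensive.

Lemma bernoulli_expn c L : c ^ L * (c + L) <= c.+1 ^ L * c.
Proof.
elim: L => [|L IH]; first by rewrite !expn0 addn0 !mul1n.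
rewrite !expnS; move: IH; move: (c ^ L) (c.+1 ^ L) => X Y IH.
have : c.+1 * (X * (c + L)) <= c.+1 * (Y * c) by rewrite leq_mul2l IH orbT.
nia.
Qed.

Lemma expn_succ_dominates c a : exists L, c ^ L * a <= c.+1 ^ L.
Proof.
case: c => [|c]; first by exists 1; rewrite expn1 mul0n.
exists (c.+1 * a); have := bernoulli_expn c.+1 (c.+1 * a).
move: (c.+1 ^ _) (c.+2 ^ _) => X Y h.
have : c.+1 * (X * a) <= c.+1 * Y by nia.
by rewrite leq_pmul2l.
Qed.

Lemma expn_pred_mul_lt b a w j L : 0 < b -> b.-1 ^ L * a <= b ^ L ->
  0 < w -> L.+1 * j <= w -> b.-1 ^ w * a ^ j < b ^ w.
Proof.
move=> b_gt0 hL w_gt0 hw.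
have lt_Lj_w : L * j < w.
  by case: j hw => [|j] hw; rewrite ?muln0 // (leq_trans _ hw) // ltn_pmul2r.
have [r ->] : exists r, w = L * j + r.+1 by exists (w - L * j).-1; lia.
rewrite !expnD mulnAC mulnC expnM -expnMn (mulnC L) expnM.
apply: leq_ltn_trans (_ : b.-1 ^ r.+1 * (b ^ L) ^ j < _).
  rewrite leq_mul2l; apply/orP; right.
  by case: (j) => // k; rewrite leq_exp2r.
by rewrite -!expnM mulnC (mulnC j) ltn_pmul2l ?expn_gt0 ?b_gt0 // ltn_exp2r // prednK.
Qed.

(* [b] defective and [g] good points among [d]; the good ones are covered by [w]
   blocks of weight [Q]. *)
Lemma few_defects n k d b g w Q L : 0 < d -> k * (L.+1 * Q + 1) < n ->
  n * b <= k * d -> d = b + g -> g <= w * Q -> 0 < w /\ L.+1 * b <= w.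
Proof.
move=> d_gt0 n_big nb_le d_eq g_le.
have key : k * Q * (L.+1 * b) + b <= k * Q * w.
  have : n * b <= k * b + k * (w * Q).
    by rewrite -mulnDr (leq_trans nb_le) // d_eq leq_mul2l leq_add2l g_le orbT.
  have : (k * (L.+1 * Q + 1)).+1 * b <= n * b by rewrite leq_mul2r n_big orbT.
  nia.
have w_gt0 : 0 < w.
  by rewrite lt0n; apply/eqP => w0; move: key g_le d_gt0; rewrite d_eq w0 !muln0; lia.
split=> //; have [kQ0|kQ_gt0] := posnP (k * Q).
  by move: key; rewrite kQ0 !mul0n add0n leqn0 => /eqP ->; rewrite muln0.
by rewrite -(leq_pmul2l kQ_gt0) (leq_trans _ key) ?leq_addr.
Qed.

Lemma leq_mul_card_has (I : eqType) (T : finType) (E : I -> pred T) (r : seq I) n d :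
  {in r, forall i, n * #|[set v | E i v]| <= d} ->
  n * #|[set v | has (E ^~ v) r]| <= size r * d.
Proof.
elim: r => [|i r IH] hE /=.
  by rewrite (_ : [set v | false] = set0) ?cards0 ?muln0 //; apply/setP => v; rewrite !inE.
have -> : [set v | E i v || has (E ^~ v) r] = [set v | E i v] :|: [set v | has (E ^~ v) r].
  by apply/setP => v; rewrite !inE.
rewrite mulSn; apply: leq_trans (_ : n * (#|[set v | E i v]| + #|[set v | has (E ^~ v) r]|) <= _).
  by rewrite leq_mul2l (leq_card_setU _ _).1 orbT.
rewrite mulnDr leq_add ?hE ?mem_head // IH // => j rj.
by apply: hE; rewrite in_cons rj orbT.
Qed.

Lemma exists_maximal_packing (X Y : eqType) (good : pred X) (blk : X -> seq Y) (s : seq X) :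
  (forall v, good v -> uniq (blk v)) -> (forall v, good v -> 0 < size (blk v)) ->
  exists W : seq X, [/\ all good W, uniq (flatten (map blk W)) &
    {in s, forall v, good v -> has (mem (flatten (map blk W))) (blk v)}].
Proof.
move=> blk_uniq blk_gt0; elim: s => [|v s [W [goodW uniqW maxW]]].
  by exists [::].
case: (boolP (good v && ~~ has (mem (flatten (map blk W))) (blk v))) => [/andP[gv free_v]|].
  exists (v :: W); split; first by rewrite /= gv.
    by rewrite /= cat_uniq blk_uniq // uniqW has_sym free_v.
  move=> u; rewrite in_cons => /predU1P[-> _|su gu].
    have [y yv] : exists y, y \in blk v.
      by case: (blk v) (blk_gt0 v gv) => // y l _; exists y; rewrite mem_head.
    by apply/hasP; exists y; rewrite //= mem_cat yv.
  by apply: sub_has (maxW u su gu) => y; rewrite /= mem_cat orbC => ->.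
rewrite negb_and negbK => covered_v; exists W; split=> // u.
by rewrite in_cons => /predU1P[-> gv|/maxW//]; rewrite gv in covered_v.
Qed.

Lemma exists_packing (X : eqType) (D : finType) (rho : X -> D -> D) (P : seq X)
    (good : pred D) Delta :
  0 < size P -> (forall v, good v -> uniq [seq rho p v | p <- P]) ->
  {in P, forall p u, #|[set v | rho p v == u]| <= Delta} ->
  exists W : seq D, [/\ all good W,
    uniq (flatten [seq [seq rho p w | p <- P] | w <- W]) &
    #|[set v | good v]| <= size W * (size P ^ 2 * Delta)].
Proof.
move=> P_gt0 good_uniq preim_small.
have [|W [goodW uniqW maxW]] := exists_maximal_packing (enum D) good_uniq.
  by move=> v _; rewrite size_map.
exists W; split => //.
set U := flatten [seq [seq rho p w | p <- P] | w <- W].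
have sizeU : size U = size P * size W.
  by rewrite /U; elim: (W) => [|w W' IH] /=; rewrite ?muln0 // size_cat size_map IH mulnS.
apply: leq_trans (_ : #|[set v | has (fun p => has (fun u => u == rho p v) U) P]| <= _).
  apply: subset_leq_card; apply/subsetP => v; rewrite !inE => gv.
  have := maxW v (mem_enum _ v) gv; rewrite has_map => /hasP[p pP Up].
  by apply/hasP; exists p => //; rewrite has_pred1.
rewrite -[#|_|]mul1n; apply: leq_trans (@leq_mul_card_has _ _ _ P 1 (size U * Delta) _) _.
  move=> p pP; apply: (@leq_mul_card_has _ _ (fun u v => u == rho p v)) => u _.
  rewrite mul1n (leq_trans _ (preim_small p pP u)) // subset_leq_card //.
  by apply/subsetP => v; rewrite !inE eq_sym.
by apply/eq_leq; rewrite sizeU -mulnn !mulnA -(mulnA (size W)) (mulnC (size W)).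
Qed.

Section BlockCounting.
Variables (D A : finType).

Lemma card_image_lower_bound (F G : {ffun D -> A} -> {ffun D -> A}) (B : {set D}) :
  (forall c v, v \notin B -> G (F c) v = c v) ->
  #|A| ^ #|D| <= #|[set F c | c : {ffun D -> A}]| * #|A| ^ #|B|.
Proof.
move=> GFK; pose restr (c : {ffun D -> A}) : {ffun {v | v \in B} -> A} := [ffun s => c (val s)].
have inj : injective (fun c => (F c, restr c)).
  move=> c c' [eqF eqR]; apply/ffunP => v; case: (boolP (v \in B)) => vB.
    by have := congr1 (fun f : {ffun {v | v \in B} -> A} => f (exist _ v vB)) eqR; rewrite !ffunE.
  by rewrite -(GFK c v vB) -(GFK c' v vB) eqF.
have cardR : #|{ffun {v | v \in B} -> A}| = #|A| ^ #|B| by rewrite card_ffun card_sig.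
rewrite -card_ffun -cardR -!cardsT -cardsX -(card_imset _ inj) subset_leq_card //.
by apply/subsetP => _ /imsetP[c _ ->]; rewrite !inE andbT; apply/imsetP; exists c.
Qed.

Variables (N : nat) (pos : D -> N.-tuple D).

Definition block (d : {ffun D -> A}) (w : D) : {ffun 'I_N -> A} :=
  [ffun k => d (tnth (pos w) k)].

Lemma card_block_avoiding (pat : {ffun 'I_N -> A}) (W : seq D) :
  uniq (flatten [seq val (pos w) | w <- W]) ->
  #|[set d | all (fun w => block d w != pat) W]| * (#|A| ^ N) ^ size W
    <= (#|A| ^ N).-1 ^ size W * #|A| ^ #|D|.
Proof.
set U := flatten _ => uniqU.
have sizeU : size U = N * size W.
  by rewrite /U; elim: (W) => [|w W' IH] /=; rewrite ?muln0 // size_cat size_tuple IH mulnS.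
pose blocks (d : {ffun D -> A}) : {ffun 'I_(size W) -> {ffun 'I_N -> A}} :=
  [ffun i => block d (tnth (in_tuple W) i)].
pose rest (d : {ffun D -> A}) : {ffun {v | v \notin U} -> A} := [ffun s => d (val s)].
have inj : injective (fun d => (blocks d, rest d)).
  move=> d d' [eqB eqR]; apply/ffunP => v; case: (boolP (v \in U)) => vU; last first.
    have := congr1 (fun f : {ffun {v | v \notin U} -> A} => f (exist _ v vU)) eqR.
    by rewrite !ffunE.
  have /flattenP[_ /mapP[w wW ->] /tnthP[k ->]] := vU.
  have /tnthP[i wi] : w \in in_tuple W := wW.
  have := congr1 (fun f : {ffun 'I_(size W) -> {ffun 'I_N -> A}} => f i k) eqB.
  by rewrite !ffunE -wi.
have sub : [set (blocks d, rest d) | d in [set d | all (fun w => block d w != pat) W]]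
    \subset setX [set f in ffun_on [set~ pat]] setT.
  apply/subsetP => _ /imsetP[d + ->]; rewrite inE => /allP avoid.
  by rewrite !inE andbT; apply/ffun_onP => i; rewrite ffunE !inE avoid ?mem_tnth.
have := subset_leq_card sub; rewrite (card_in_imset (in2W inj)) cardsX cardsT !cardsE.
rewrite card_ffun_on cardsC1 card_ffun !card_ord card_ffun card_sig.
have -> : #|[pred v | v \notin U]| = #|D| - N * size W.
  by rewrite -sizeU -(card_uniqP uniqU) -(cardC (mem U)) addKn.
move=> h; rewrite -expnM -[#|D|](subnK (_ : N * size W <= #|D|)).
  by rewrite expnD mulnA leq_mul2r h orbT.
by rewrite -sizeU -(card_uniqP uniqU) max_card.
Qed.

Lemma block_entropy_bound (F G : {ffun D -> A} -> {ffun D -> A}) (B : {set D})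
    (pat : {ffun 'I_N -> A}) (W : seq D) :
  0 < #|A| -> (forall c v, v \notin B -> G (F c) v = c v) ->
  (forall c, all (fun w => block (F c) w != pat) W) ->
  uniq (flatten [seq val (pos w) | w <- W]) ->
  (#|A| ^ N) ^ size W <= (#|A| ^ N).-1 ^ size W * #|A| ^ #|B|.
Proof.
move=> A_gt0 GFK avoid uniqU.
have sub : [set F c | c : {ffun D -> A}] \subset [set d | all (fun w => block d w != pat) W].
  by apply/subsetP => _ /imsetP[c _ ->]; rewrite inE avoid.
have lower := leq_mul (card_image_lower_bound GFK) (leqnn ((#|A| ^ N) ^ size W)).
have upper := leq_mul (leq_mul (subset_leq_card sub) (leqnn ((#|A| ^ N) ^ size W)))
  (leqnn (#|A| ^ #|B|)).
rewrite -(@leq_pmul2l (#|A| ^ #|D|)) ?expn_gt0 ?A_gt0 //.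
apply: leq_trans lower _; rewrite mulnAC.
apply: leq_trans upper _.
by rewrite mulnCA mulnA leq_mul2r; apply/orP; right; apply: card_block_avoiding.
Qed.

End BlockCounting.

Section HammingBounds.
Local Open Scope R_scope.

Lemma ratio_le_inv (a d n : nat) : (0 < d)%N -> (0 < n)%N ->
  INR a / INR d <= / INR n -> (n * a <= d)%N.
Proof.
move=> /ltP/lt_0_INR d_gt0 /ltP/lt_0_INR n_gt0 h.
apply/leP/INR_le; rewrite mult_INR Rmult_comm.
have -> : INR a * INR n = INR a / INR d * (INR d * INR n) by field; lra.
apply: Rle_trans (Rmult_le_compat_r _ _ _ _ h) _; first by nra.
by right; field; lra.
Qed.

Lemma ham_le_inv (D : finType) (f g : D -> D) n : (0 < #|D|)%N -> (0 < n)%N ->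
  ham f g <= / INR n -> (n * #|[set v | f v != g v]| <= #|D|)%N.
Proof. exact: ratio_le_inv. Qed.

Lemma ham_ge_1_inv (D : finType) (f g : D -> D) n : (0 < #|D|)%N -> (0 < n)%N ->
  1 - / INR n <= ham f g -> (n * #|[set v | f v == g v]| <= #|D|)%N.
Proof.
move=> D_gt0 n_gt0 h; apply: ratio_le_inv => //.
have -> : [set v | f v == g v] = ~: [set v | f v != g v].
  by apply/setP => v; rewrite !inE negbK.
move: h; rewrite /ham [#|~: _|]cardsCs setCK minus_INR; last by apply/leP/max_card.
have : 0 < INR #|D| by apply/lt_0_INR/ltP.
move=> D_pos h; rewrite /Rdiv Rmult_minus_distr_r Rinv_r; lra.
Qed.

End HammingBounds.

(* A module, so that the [set _ | _] notations of classical_sets do not shadow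
   those of finset in the rest of the file. *)
Module Compactness.
Import mathcomp_extra classical_sets cardinality topology function_spaces ArrowAsProduct.
Local Open Scope classical_set_scope.

Lemma uniform_finite_memory (M : Type) (A : finType) (g : (M -> A) -> A) :
  (forall x, exists F : seq M,
     forall y, (forall f, List.In f F -> y f = x f) -> g y = g x) ->
  exists S : seq M, forall x y, (forall s, List.In s S -> y s = x s) -> g y = g x.
Proof.
move=> g_loc; apply: contrapT => no_memory.
pose K := fun _ : {classic M} => discrete_topology A.
pose bad S := [set x : forall i, K i | exists y : M -> A,
   (forall s, List.In s S -> y s = x s) /\ g y <> g x].
have bad_proper : ProperFilter (filter_from [set: seq M] bad).
  apply: filter_from_proper; last first.
    move=> S _; apply: contrapT => bad0; apply: no_memory.
    exists S => x y xy; apply: contrapT => gxy.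
    by apply: bad0; exists x, y.
  apply: filter_fromT_filter; first by exists [::].
  move=> S S'; exists (S ++ S') => x [y [yx gyx]].
  by split; exists y; split => // s sS; apply: yx; apply: List.in_or_app; [left|right].
have cpt : compact [set x : forall i, K i | forall i, [set: K i] (x i)].
  apply: (@tychonoff _ K (fun i => [set: K i])) => i; apply: finite_compact.
  exact: (@finite_finset A setT).
have [p [_ p_cluster]] := cpt _ bad_proper (filterS (fun _ _ _ => I) filterT).
have [F hF] := g_loc p.
have nbhs_F : nbhs p [set x : forall i, K i | forall f, List.In f F -> x f = p f].
  elim: F {hF} => [|f F IH]; first by apply: filterS filterT => x _ f [].
  have nbhs_f : nbhs p (proj f @^-1` [set p f]).
    by apply: proj_continuous; exact: (@discrete_set1 (discrete_topology A)).
  by apply: filterS (filterI nbhs_f IH) => x [xf xF] f' [<-|/xF].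
have [x [[y [yx gyx]] xp]] := p_cluster (bad F) _ (ex_intro2 _ _ F I (fun _ h => h)) nbhs_F.
apply: gyx; rewrite (hF y) ?(hF x) // => f fF.
by rewrite yx // xp.
Qed.

End Compactness.

Lemma InP (T : eqType) (x : T) (s : seq T) : reflect (List.In x s) (x \in s).
Proof.
elim: s => [|y s IH]; first by right.
by rewrite in_cons; apply: (iffP predU1P) => [[->|/IH]|[->|/IH]]; by [left | right].
Qed.

Section LocalSimulation.
Variables (M : Type) (mul : M -> M -> M) (one : M) (A D : finType) (rho : M -> D -> D).
Hypothesis mul1m : forall m, mul one m = m.

Definition memory_set (g : (M -> A) -> M -> A) (S : seq M) : Prop :=
  forall x y, (forall s, List.In s S -> y s = x s) -> g y one = g x one.

Definition pullback (c : {ffun D -> A}) (v : D) : M -> A := fun m => c (rho m v).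

Definition simulate (g : (M -> A) -> M -> A) (c : {ffun D -> A}) : {ffun D -> A} :=
  [ffun v => g (pullback c v) one].

Lemma equivariant_at (g : (M -> A) -> M -> A) x m :
  equivariant mul g -> g x m = g (shift mul m x) one.
Proof. by move=> g_eq; rewrite g_eq /shift mul1m. Qed.

Lemma equivariant_pullback g S c v t : equivariant mul g -> memory_set g S ->
    (forall s, List.In s S -> rho (mul s t) v = rho s (rho t v)) ->
  g (pullback c v) t = g (pullback c (rho t v)) one.
Proof.
move=> g_eq g_mem rho_mul; rewrite equivariant_at //; apply: g_mem => s sS.
by rewrite /shift /pullback rho_mul.
Qed.

End LocalSimulation.

Section SoficDefect.
Variables (M : eqType) (mul : M -> M -> M) (D : finType) (rho : M -> D -> D) (K : seq M).

Definition sofic_defect (v : D) : bool :=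
  has (fun k1 => has (fun k2 => (rho (mul k1 k2) v != rho k1 (rho k2 v))
    || (k1 != k2) && (rho k1 v == rho k2 v)) K) K.

Lemma sofic_defectPn v : ~~ sofic_defect v ->
  {in K &, forall k1 k2, rho (mul k1 k2) v = rho k1 (rho k2 v)} /\
  {in K &, injective (rho ^~ v)}.
Proof.
move=> /hasPn no_defect; split=> k1 k2 k1K k2K; have /hasPn/(_ k2 k2K) := no_defect k1 k1K.
  by rewrite negb_or => /andP[/negbNE/eqP].
by rewrite negb_or negb_and => /andP[_ /orP[/negPn/eqP // | /eqP neq /neq []]].
Qed.

Lemma card_sofic_defect n : (0 < #|D|)%N -> (0 < n)%N ->
  (forall k1 k2, List.In k1 K -> List.In k2 K ->
     Rle (ham (rho (mul k1 k2)) (fun v => rho k1 (rho k2 v))) (/ INR n)) ->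
  (forall k1 k2, List.In k1 K -> List.In k2 K -> k1 <> k2 ->
     Rle (1 - / INR n) (ham (rho k1) (rho k2))) ->
  n * #|[set v | sofic_defect v]| <= size K * (size K * #|D|.*2).
Proof.
move=> D_gt0 n_gt0 rho_mul rho_dist.
apply: leq_mul_card_has => k1 /InP k1K; apply: leq_mul_card_has => k2 /InP k2K.
set E1 := [set v | rho (mul k1 k2) v != rho k1 (rho k2 v)].
set E2 := [set v | (k1 != k2) && (rho k1 v == rho k2 v)].
apply: leq_trans (_ : n * (#|E1| + #|E2|) <= _).
  rewrite leq_mul2l (leq_trans _ (leq_card_setU E1 E2).1) ?orbT //.
  by apply: subset_leq_card; apply/subsetP => v; rewrite !inE.
rewrite mulnDr -addnn leq_add ?(ham_le_inv _ _ (rho_mul _ _ k1K k2K)) //.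
case: (eqVneq k1 k2) => [k12|k12].
  by rewrite (_ : E2 = set0) ?cards0 ?muln0 // -setP => v; rewrite !inE k12 eqxx.
apply: leq_trans (ham_ge_1_inv D_gt0 n_gt0 (rho_dist _ _ k1K k2K (elimN eqP k12))).
by rewrite leq_mul2l subset_leq_card ?orbT //; apply/subsetP => v; rewrite !inE k12.
Qed.

End SoficDefect.

Section DirectFiniteness.
Variables (M : eqType) (mul : M -> M -> M) (one : M) (A : finType).
Variables (tau sigma : (M -> A) -> M -> A) (St Ss : seq M).
Hypotheses (mul1m : forall m, mul one m = m) (sofic : strongly_sofic mul one).
Hypotheses (tau_eq : equivariant mul tau) (sigma_eq : equivariant mul sigma).
Hypotheses (tau_mem : memory_set one tau St) (sigma_mem : memory_set one sigma Ss).
Hypothesis sigmaK : forall x, tau (sigma x) = x.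

Let P := undup (one :: [seq mul t s | t <- St, s <- Ss]).
Let K := Ss ++ St ++ P.

Let P_one : one \in P. Proof. by rewrite mem_undup mem_head. Qed.
Let Ss_K : {subset Ss <= K}. Proof. by move=> s sS; rewrite mem_cat sS. Qed.
Let St_K : {subset St <= K}. Proof. by move=> t tS; rewrite !mem_cat tS orbT. Qed.
Let P_K : {subset P <= K}. Proof. by move=> p pP; rewrite !mem_cat pP !orbT. Qed.

Lemma no_sigma_preimage x : sigma (tau x) one != x one ->
  forall y, ~ {in P, forall p, sigma y p = x p}.
Proof.
move=> /eqP ne y yx; apply: ne; rewrite -(yx one P_one) -(sigmaK y).
apply: sigma_mem => s /InP sS; rewrite !(equivariant_at mul1m _ s tau_eq).
apply: tau_mem => t /InP tS.
by rewrite /shift yx // mem_undup in_cons allpairs_f ?orbT.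
Qed.

Lemma simulate_tau_sigma (D : finType) (rho : M -> D -> D) c v :
  (forall u, rho one u = u) -> ~~ sofic_defect mul rho K v ->
  simulate one rho tau (simulate one rho sigma c) v = c v.
Proof.
move=> rho1 /sofic_defectPn[rho_mul _].
transitivity (tau (sigma (pullback rho c v)) one); last by rewrite sigmaK /pullback rho1.
rewrite ffunE; apply: tau_mem => t /InP tS.
rewrite {1}/pullback ffunE; symmetry.
apply: (equivariant_pullback mul1m _ sigma_eq sigma_mem) => s /InP sS.
by apply: rho_mul; [apply: Ss_K | apply: St_K].
Qed.

Lemma simulate_sigma_avoids x (D : finType) (rho : M -> D -> D) c w :
  sigma (tau x) one != x one -> ~~ sofic_defect mul rho K w ->
  block (fun v => map_tuple (rho ^~ v) (in_tuple P)) (simulate one rho sigma c) w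
    != [ffun k => x (tnth (in_tuple P) k)].
Proof.
move=> ne /sofic_defectPn[rho_mul _]; apply/eqP => /ffunP block_eq.
apply: (no_sigma_preimage ne (y := pullback rho c w)) => p pP.
have /tnthP[k ->] : p \in in_tuple P := pP.
have := block_eq k; rewrite !ffunE tnth_map => <-.
apply: (equivariant_pullback mul1m _ sigma_eq sigma_mem) => s /InP sS.
by apply: rho_mul; [apply: Ss_K | apply: P_K; rewrite mem_tnth].
Qed.

Lemma sigma_tau_one x : sigma (tau x) one = x one.
Proof.
apply/eqP; apply: contraT => ne.
have [Delta [Delta_gt0 approx]] := sofic K.
have A_gt0 : 0 < #|A| by apply/card_gt0P; exists (x one).
have [L dominates] := expn_succ_dominates (#|A| ^ size P).-1 #|A|.
rewrite prednK ?expn_gt0 ?A_gt0 // in dominates.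
set k := size K * (size K * 2); set Q := size P ^ 2 * Delta.
pose n := (k * (L.+1 * Q + 1)).+1.
have /ltP/lt_0_INR/Rinv_0_lt_compat := ltn0Sn (k * (L.+1 * Q + 1)).
move=> /approx[D [rho [D_gt0 [rho1 [rho_mul [rho_dist rho_preim]]]]]].
set B := [set v | sofic_defect mul rho K v].
have card_B : n * #|B| <= k * #|D|.
  apply: leq_trans (card_sofic_defect D_gt0 (ltn0Sn _) rho_mul rho_dist) _.
  by rewrite /k -muln2 -!mulnA (mulnC #|D|).
have P_gt0 : 0 < size P by case: (P) P_one.
have sound_uniq v : ~~ sofic_defect mul rho K v -> uniq [seq rho p v | p <- P].
  move=> /sofic_defectPn[_ rho_inj]; rewrite map_inj_in_uniq ?undup_uniq //.
  by move=> p q /P_K pK /P_K qK; apply: rho_inj.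
have preim_small : {in P, forall p u, #|[set v | rho p v == u]| <= Delta}.
  by move=> p /P_K /InP pK u; apply: rho_preim.
have [W [soundW uniqW card_sound]] := exists_packing P_gt0 sound_uniq preim_small.
have card_D : #|D| = #|B| + #|[set v | ~~ sofic_defect mul rho K v]|.
  have -> : [set v | ~~ sofic_defect mul rho K v] = ~: B by apply/setP => v; rewrite !inE.
  by rewrite cardsC.
have [W_gt0 B_small] := few_defects D_gt0 (leqnn n) card_B card_D card_sound.
have GFK c v : v \notin B -> simulate one rho tau (simulate one rho sigma c) v = c v.
  by rewrite inE; apply: simulate_tau_sigma.
have avoid c : all (fun w => block (fun v => map_tuple (rho ^~ v) (in_tuple P))
    (simulate one rho sigma c) w != [ffun k => x (tnth (in_tuple P) k)]) W.
  by apply/allP => w /(allP soundW); apply: simulate_sigma_avoids.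
have := block_entropy_bound A_gt0 GFK avoid uniqW.
by rewrite leqNgt (expn_pred_mul_lt _ dominates) ?expn_gt0 ?A_gt0.
Qed.

End DirectFiniteness.

Theorem corollary1p2 (M : Type) (mul : M -> M -> M) (one : M)
    (hM : is_monoid mul one) (hsofic : strongly_sofic mul one) (A : finType)
    (tau sigma : (M -> A) -> (M -> A)) :
  is_CA mul tau -> is_CA mul sigma ->
  (forall x, tau (sigma x) = x) -> (forall x, sigma (tau x) = x).
Proof.
case: hM => _ [mul1m _] [tau_cont tau_eq] [sigma_cont sigma_eq] sigmaK x.
have [St tau_mem] := Compactness.uniform_finite_memory (fun y => tau_cont y one).
have [Ss sigma_mem] := Compactness.uniform_finite_memory (fun y => sigma_cont y one).
apply: funext => m.
have := @sigma_tau_one {classic M} mul one A tau sigma St Ss mul1m hsofic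
  tau_eq sigma_eq tau_mem sigma_mem sigmaK (shift mul m x).
by rewrite tau_eq sigma_eq /shift !mul1m.
Qed.
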